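(* Let $k\ge2$, $K\ge1$ be integers, let $R\ge k$ be an integer and $L$ a positive integer divisible by $R^{K-1}$. For $A$ dividing $L$ let $f_A=(\mathsf{1}^A\mathsf{2}^A\cdots\mathsf{k}^A)^{L/A}\in[k]^{kL}$, and for a word $w$ over $[K]$ let $\hat w$ be the word over $[k]$ obtained by replacing each symbol $l\in[K]$ of $w$ by $f_{R^{l-1}}$. Let $w_1,w_2$ be words over $[K]$ and let $s=(w_1',w_2')$ be a badly-matched common subsequence between $\hat w_1$ and $\hat w_2$. Then \[\operatorname{span} w_1'+\operatorname{span} w_2'\ \ge\ \left(k+1-\frac kR-\frac{8R^{K-1}}{L}\right)\operatorname{len} s-16R^{K-1}.\]
   Context: $\alpha^A$ denotes letter $\alpha$ repeated $A$ times, and $u^m$ denotes $m$ concatenated copies of the word $u$. Symbols are distinguishable positions. If a symbol $x$ of $\hat w$ arises from expanding the symbol $y$ of $w$, then $y$ is the parent of $x$. A common subsequence of words $u_1,u_2$ is a pair $(u_1',u_2')$ of subsequences of $u_1,u_2$ that are equal as words, with length $\operatorname{len}$ their common length. For a common subsequence $(w_1',w_2')$ of $\hat w_1,\hat w_2$, its $i$-th symbol is well-matched if the parents of $w_1'[i]$ and $w_2'[i]$ are the same letter of $[K]$; the common subsequence is badly-matched if none of its symbols is well-matched. The span of a subsequence $w'$ in $w$ is the length of the shortest subword (block of consecutive symbols) of $w$ containing $w'$; $\operatorname{span} w_1'$ is taken in $\hat w_1$ and $\operatorname{span}w_2'$ in $\hat w_2$. *)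

From mathcomp Require Import all_boot all_order all_algebra.
Set Implicit Arguments. Unset Strict Implicit. Unset Printing Implicit Defensive.
Import Order.TTheory GRing.Theory Num.Theory.

(* Letters of [k] are the naturals 1..k; letters of [K] are 1..K. *)

Definition fword (k L A : nat) : seq nat :=
  flatten (nseq (L %/ A) (flatten [seq nseq A c | c <- iota 1 k])).

Definition hatw (k R L : nat) (w : seq nat) : seq nat :=
  flatten [seq fword k L (R ^ (l - 1)) | l <- w].

(* A subsequence of a word u is encoded by the strictly increasing sequence of
   its positions (symbols are positions) in u. *)
Definition is_subseq_pos (u : seq nat) (I : seq nat) : Prop :=
  sorted ltn I /\ all (fun i => i < size u) I.

Definition common_subseq (u1 u2 : seq nat) (I1 I2 : seq nat) : Prop :=
  [/\ is_subseq_pos u1 I1, is_subseq_pos u2 I2, size I1 = size I2 &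
      forall j, j < size I1 -> nth 0 u1 (nth 0 I1 j) = nth 0 u2 (nth 0 I2 j)].

(* the parent of position i of \hat w is the symbol of w at index i %/ (k L),
   since every block f_{R^(l-1)} has length kL *)
Definition parent_letter (k L : nat) (w : seq nat) (i : nat) : nat :=
  nth 0 w (i %/ (k * L)).

Definition badly_matched (k L : nat) (w1 w2 : seq nat) (I1 I2 : seq nat) : Prop :=
  forall j, j < size I1 ->
    parent_letter k L w1 (nth 0 I1 j) != parent_letter k L w2 (nth 0 I2 j).

Definition wspan (I : seq nat) : nat :=
  if I is i :: _ then (last i I - i).+1 else 0.

(* For the j-th matched pair of positions (p_j, q_j) let A_j and B_j be the scales
   R^(l-1) of their parent symbols; since the pair is badly matched the two
   scales differ, so one of them is at least R times the other.  Inside a fixed pair of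
   parent blocks, with A the finer and B the coarser scale, the potential
     R (p + q) + R (k - 1) (p mod A) - k (q mod B)
   grows by at least R (k + 1) - k from one matched symbol to the next: in the coarse
   word a run of equal letters is either continued, gaining (R - k)(q' - q) against the
   offset term, or left, gaining k B >= R (k - 1) A; in the fine word two equal letters
   lie either in the same run, which costs k per step of p + (k - 1)(p mod A), or a whole
   period k A apart.  Entering a new parent block perturbs the offset terms by at most
   2 k M, where M = R^(K-1), and is paid for by a bonus of 4 R M per block.  Blocks have
   length k L, so at most (span - 2) / (k L) + 2 blocks are entered, and dividing the
   total growth by R gives the bound. *)

From mathcomp Require Import all_boot all_order all_algebra.
From mathcomp Require Import zify ring lra.

Set Implicit Arguments.
Unset Strict Implicit.
Unset Printing Implicit Defensive.

Section UniformFlatten.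
Variables (T : Type) (n : nat) (ss : seq (seq T)).
Hypothesis size_ss : all (fun s => size s == n) ss.

Lemma size_flatten_uniform : size (flatten ss) = n * size ss.
Proof.
elim: ss size_ss => [|s ss' IH] /=; first by rewrite muln0.
by case/andP=> /eqP size_s /IH IH'; rewrite size_cat size_s IH' mulnS.
Qed.

Lemma nth_flatten_uniform (x0 : T) i : i < n * size ss ->
  nth x0 (flatten ss) i = nth x0 (nth [::] ss (i %/ n)) (i %% n).
Proof.
elim: ss size_ss i => [|s ss' IH] /=; first by move=> _ i; rewrite muln0.
case/andP=> /eqP size_s size_ss' i; rewrite mulnS nth_cat size_s => i_lt.
have [i_lt_n | n_le_i] := ltnP i n; first by rewrite divn_small // modn_small.
have n_gt0 : 0 < n by lia.
have -> : i = i - n + n by rewrite subnK.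
rewrite addnK divnDr ?dvdnn // divnn n_gt0 addn1 modnDr /=.
by apply: IH => //; lia.
Qed.

End UniformFlatten.

Lemma fword_period_uniform k A :
  all (fun s => size s == A) [seq nseq A c | c <- iota 1 k].
Proof. by apply/allP=> s /mapP[c _ ->]; rewrite size_nseq. Qed.

Lemma fword_uniform k L A :
  all (fun s => size s == A * k) (nseq (L %/ A) (flatten [seq nseq A c | c <- iota 1 k])).
Proof.
apply/allP=> s; rewrite mem_nseq => /andP[_ /eqP->].
by rewrite (size_flatten_uniform (fword_period_uniform _ _)) size_map size_iota.
Qed.

Lemma size_fword k L A : A %| L -> size (fword k L A) = k * L.
Proof.
move=> A_dvd_L; rewrite /fword (size_flatten_uniform (fword_uniform _ _ _)).
by rewrite size_nseq mulnC mulnA divnK // mulnC.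
Qed.

Lemma nth_fword k L A i : 0 < A -> A %| L -> i < k * L ->
  nth 0 (fword k L A) i = (i %/ A) %% k + 1.
Proof.
move=> A_gt0 A_dvd_L i_lt.
have k_gt0 : 0 < k by case: k i_lt.
have Ak_gt0 : 0 < A * k by rewrite muln_gt0 A_gt0.
have kL_eq : A * k * (L %/ A) = k * L by rewrite mulnC mulnA divnK // mulnC.
rewrite /fword (nth_flatten_uniform (fword_uniform _ _ _)); last first.
  by rewrite size_nseq kL_eq.
rewrite nth_nseq ltn_divLR // mulnC kL_eq i_lt.
rewrite (nth_flatten_uniform (fword_period_uniform _ _)); last first.
  by rewrite size_map size_iota ltn_pmod.
have block_eq : i %% (A * k) %/ A = i %/ A %% k by rewrite modn_divl mulnC.
have offset_eq : i %% (A * k) %% A = i %% A by rewrite modn_dvdm ?dvdn_mulr.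
rewrite block_eq offset_eq (nth_map 0) ?size_iota ?ltn_pmod //.
by rewrite nth_nseq ltn_pmod // nth_iota ?ltn_pmod // addnC.
Qed.

Section HatWord.
Variables (k R L : nat) (w : seq nat).
Hypothesis scale_dvd : {in w, forall l, R ^ (l - 1) %| L}.

Lemma hatw_uniform :
  all (fun s => size s == k * L) [seq fword k L (R ^ (l - 1)) | l <- w].
Proof. by apply/allP=> s /mapP[l /scale_dvd l_dvd ->]; rewrite size_fword. Qed.

Lemma size_hatw : size (hatw k R L w) = k * L * size w.
Proof. by rewrite (size_flatten_uniform hatw_uniform) size_map. Qed.

Definition parent_scale p := R ^ (parent_letter k L w p - 1).

Lemma parent_letter_mem p : p < k * L * size w -> parent_letter k L w p \in w.
Proof.
move=> p_lt; have kL_gt0 : 0 < k * L by case: (k * L) p_lt.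
by apply: mem_nth; rewrite ltn_divLR // mulnC.
Qed.

Lemma nth_hatw p : 0 < R -> p < k * L * size w ->
  nth 0 (hatw k R L w) p = (p %/ parent_scale p) %% k + 1.
Proof.
move=> R_gt0 p_lt; have kL_gt0 : 0 < k * L by case: (k * L) p_lt.
rewrite (nth_flatten_uniform hatw_uniform) ?size_map //.
have block_lt : p %/ (k * L) < size w by rewrite ltn_divLR // mulnC.
rewrite (nth_map 0) // /parent_scale /parent_letter.
have /scale_dvd scale_dvd_L := mem_nth 0 block_lt.
set A := R ^ _ in scale_dvd_L *; have A_gt0 : 0 < A by rewrite expn_gt0 R_gt0.
rewrite nth_fword ?ltn_pmod // !modn_divl modn_dvdm //.
by rewrite dvdn_mul.
Qed.

End HatWord.

Lemma scale_dvd_of_range K R L w : all (fun l => 0 < l <= K) w ->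
  R ^ (K - 1) %| L -> {in w, forall l, R ^ (l - 1) %| L}.
Proof.
move=> /allP w_range top_dvd l /w_range /andP[_ l_le_K].
by apply: dvdn_trans top_dvd; rewrite dvdn_exp2l // leq_sub2r.
Qed.

Lemma scale_range K R l : 0 < R -> l <= K -> 0 < R ^ (l - 1) <= R ^ (K - 1).
Proof. by move=> R_gt0 l_le_K; rewrite expn_gt0 R_gt0 leq_pexp2l // leq_sub2r. Qed.

Definition scale_separated (R A B : nat) := (R * A <= B) || (R * B <= A).

Lemma scale_separated_exp R l1 l2 : 0 < R -> 0 < l1 -> 0 < l2 -> l1 != l2 ->
  scale_separated R (R ^ (l1 - 1)) (R ^ (l2 - 1)).
Proof.
move=> R_gt0 l1_gt0 l2_gt0 l_neq; rewrite /scale_separated -!expnS.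
have [l1_lt | l2_lt | l_eq] := ltngtP l1 l2.
- by rewrite leq_pexp2l //; lia.
- by rewrite orbC leq_pexp2l //; lia.
- by rewrite l_eq eqxx in l_neq.
Qed.

Lemma subseq_pos_nth_lt u I j : is_subseq_pos u I -> j < size I -> nth 0 I j < size u.
Proof. by case=> _ /allP I_lt j_lt; apply/I_lt/mem_nth. Qed.

Lemma subseq_pos_nth_incr u I j : is_subseq_pos u I -> j.+1 < size I ->
  nth 0 I j < nth 0 I j.+1.
Proof.
case=> I_sorted _ j_lt.
by apply: (sorted_ltn_nth ltn_trans 0 I_sorted); rewrite ?inE // ltnW.
Qed.

Lemma wspan_nth I : 0 < size I -> wspan I = (nth 0 I (size I).-1 - nth 0 I 0).+1.
Proof. by case: I => // i I _; rewrite /= (last_nth 0). Qed.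

Section MatchedWord.
Variables (k K R L : nat) (w I : seq nat).
Hypotheses (R_gt0 : 0 < R) (w_range : all (fun l => 0 < l <= K) w).
Hypotheses (top_dvd : R ^ (K - 1) %| L) (I_pos : is_subseq_pos (hatw k R L w) I).

Let scale_dvd := scale_dvd_of_range w_range top_dvd.

Lemma matched_pos_lt j : j < size I -> nth 0 I j < k * L * size w.
Proof. by rewrite -(size_hatw k scale_dvd); apply: subseq_pos_nth_lt. Qed.

Lemma matched_parent_range j : j < size I -> 0 < parent_letter k L w (nth 0 I j) <= K.
Proof. by move=> /matched_pos_lt /parent_letter_mem /(allP w_range). Qed.

Lemma matched_scale_range j : j < size I ->
  0 < parent_scale k R L w (nth 0 I j) <= R ^ (K - 1).
Proof. by move=> /matched_parent_range /andP[_ l_le_K]; apply: scale_range. Qed.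

Lemma matched_letter j : j < size I ->
  nth 0 (hatw k R L w) (nth 0 I j) = (nth 0 I j %/ parent_scale k R L w (nth 0 I j)) %% k + 1.
Proof. by move=> /matched_pos_lt; apply: nth_hatw. Qed.

End MatchedWord.

Lemma fine_step k A p p' : 0 < k -> 0 < A -> p < p' ->
  p %/ A = p' %/ A %[mod k] ->
  p + (k - 1) * (p %% A) + k <= p' + (k - 1) * (p' %% A).
Proof.
move=> k_gt0 A_gt0 p_lt same_letter.
have p_eq := divn_eq p A; have p'_eq := divn_eq p' A.
have off_lt := ltn_pmod p A_gt0; have off'_lt := ltn_pmod p' A_gt0.
have block_le : p %/ A <= p' %/ A by rewrite leq_div2r // ltnW.
have [block_eq | block_lt] := eqVneq (p %/ A) (p' %/ A).
  by rewrite block_eq in p_eq; nia.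
have k_le_gap : k <= p' %/ A - p %/ A.
  by apply: dvdn_leq; [lia | rewrite -eqn_mod_dvd // same_letter].
nia.
Qed.

Lemma coarse_step_same_block k R B q q' : k <= R -> q < q' ->
  q %/ B = q' %/ B -> R * q + k * (q' %% B) + (R - k) <= R * q' + k * (q %% B).
Proof.
move=> k_le_R q_lt block_eq.
have q_eq := divn_eq q B; have q'_eq := divn_eq q' B.
rewrite block_eq in q_eq; nia.
Qed.

Lemma coarse_step_new_block k R B q q' : k <= R -> 0 < B -> q < q' ->
  q %/ B != q' %/ B ->
  R * q + k * (q' %% B) + (R - k) + k * B <= R * q' + k * (q %% B).
Proof.
move=> k_le_R B_gt0 q_lt block_neq.
have q_eq := divn_eq q B; have q'_eq := divn_eq q' B.
have off_lt := ltn_pmod q B_gt0.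
have block_lt : q %/ B < q' %/ B.
  by rewrite ltn_neqAle block_neq leq_div2r // ltnW.
have : q %/ B * B + B <= q' %/ B * B by rewrite -mulSnr leq_mul2r block_lt orbT.
nia.
Qed.

Lemma fine_step_any k A p p' : 0 < A -> p < p' ->
  p + (k - 1) * (p %% A) + k <= p' + (k - 1) * (p' %% A) + (k - 1) * A.
Proof. by move=> A_gt0 p_lt; have := ltn_pmod p A_gt0; nia. Qed.

Import Order.TTheory GRing.Theory Num.Theory.
Local Open Scope ring_scope.

Definition offset_potential (R k A B p q : nat) : rat :=
  R%:R * (k%:R - 1) * (p %% A)%:R - k%:R * (q %% B)%:R.

Lemma offset_potential_step (k R A B p p' q q' : nat) :
  (0 < k)%N -> (k <= R)%N -> (0 < A)%N -> (R * A <= B)%N -> (p < p')%N -> (q < q')%N ->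
  (p %/ A = q %/ B %[mod k])%N -> (p' %/ A = q' %/ B %[mod k])%N ->
  R%:R * (k%:R + 1) - k%:R + R%:R * (p + q)%:R + offset_potential R k A B p q
  <= R%:R * (p' + q')%:R + offset_potential R k A B p' q'.
Proof.
move=> k_gt0 k_le_R A_gt0 RA_le_B p_lt q_lt letter letter'.
have B_gt0 : (0 < B)%N.
  by apply: leq_trans RA_le_B; rewrite muln_gt0 A_gt0 (leq_trans k_gt0 k_le_R).
rewrite /offset_potential !natrD.
have R_ge0 : 0 <= R%:R :> rat by [].
have [block_eq | block_neq] := eqVneq (q %/ B)%N (q' %/ B)%N.
  have := coarse_step_same_block k_le_R q_lt block_eq.
  have : (p %/ A = p' %/ A %[mod k])%N by rewrite letter letter' block_eq.
  move=> /(fine_step k_gt0 A_gt0 p_lt).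
  rewrite -!(ler_nat rat) !natrD !natrM !natrB // => /(ler_wpM2l R_ge0).
  lra.
have := coarse_step_new_block k_le_R B_gt0 q_lt block_neq.
have := fine_step_any k A_gt0 p_lt.
have : ((k - 1) * (R * A) <= k * B)%N by rewrite leq_mul // leq_subr.
rewrite -!(ler_nat rat) !natrD !natrM !natrB // => scale_le.
move=> /(ler_wpM2l R_ge0); lra.
Qed.

Lemma offset_potential_bound (k R A B M p q : nat) :
  (0 < k)%N -> (0 < R)%N -> (0 < A)%N -> (R * A <= B)%N -> (B <= M)%N ->
  `|offset_potential R k A B p q| <= k%:R * M%:R.
Proof.
move=> k_gt0 R_gt0 A_gt0 RA_le_B B_le_M.
have B_gt0 : (0 < B)%N by apply: leq_trans RA_le_B; rewrite muln_gt0 R_gt0.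
have : ((k - 1) * (R * (p %% A)) <= k * M)%N.
  apply: leq_mul; first exact: leq_subr.
  by apply: leq_trans B_le_M; apply: leq_trans RA_le_B; rewrite leq_mul2l ltnW ?ltn_pmod ?orbT.
have : (k * (q %% B) <= k * M)%N.
  by rewrite leq_mul2l (leq_trans (ltnW (ltn_pmod _ B_gt0))) ?orbT.
have := ler0n rat ((k - 1) * (R * (p %% A))); have := ler0n rat (k * (q %% B)).
rewrite /offset_potential -!(ler_nat rat) !natrM natrB //.
by move=> *; rewrite ler_norml; apply/andP; split; lra.
Qed.

Definition pair_potential (R k A B p q : nat) : rat :=
  if (R * A <= B)%N then offset_potential R k A B p q else offset_potential R k B A q p.

Lemma pair_potential_step (k R A B p p' q q' : nat) :
  (0 < k)%N -> (k <= R)%N -> (0 < A)%N -> (0 < B)%N -> scale_separated R A B ->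
  (p < p')%N -> (q < q')%N ->
  (p %/ A = q %/ B %[mod k])%N -> (p' %/ A = q' %/ B %[mod k])%N ->
  R%:R * (k%:R + 1) - k%:R + R%:R * (p + q)%:R + pair_potential R k A B p q
  <= R%:R * (p' + q')%:R + pair_potential R k A B p' q'.
Proof.
move=> k_gt0 k_le_R A_gt0 B_gt0 sep p_lt q_lt letter letter'.
rewrite /pair_potential; case: ifP => [RA_le_B | /negbT RA_gt_B].
  exact: offset_potential_step.
have RB_le_A : (R * B <= A)%N by move: sep; rewrite /scale_separated (negbTE RA_gt_B).
rewrite [(p + q)%N]addnC [(p' + q')%N]addnC.
exact: offset_potential_step (esym letter) (esym letter').
Qed.

Lemma pair_potential_bound (k R A B M p q : nat) :
  (0 < k)%N -> (0 < R)%N -> (0 < A)%N -> (0 < B)%N -> scale_separated R A B ->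
  (A <= M)%N -> (B <= M)%N -> `|pair_potential R k A B p q| <= k%:R * M%:R.
Proof.
move=> k_gt0 R_gt0 A_gt0 B_gt0 sep A_le_M B_le_M.
rewrite /pair_potential; case: ifP => [RA_le_B | /negbT RA_gt_B].
  exact: offset_potential_bound.
have RB_le_A : (R * B <= A)%N by move: sep; rewrite /scale_separated (negbTE RA_gt_B).
exact: offset_potential_bound.
Qed.

Lemma step_gain_le_block_bonus (F : realDomainType) (k r M : F) :
  1 <= k -> k <= r -> r <= M -> r * (k + 1) - k + 2 * (k * M) <= 4 * (r * M).
Proof. by move=> k_ge1 k_le_r r_le_M; nra. Qed.

Lemma span_bound_algebra (F : realFieldType) (k r M L m S e : F) :
  2 <= k -> k <= r -> k <= M -> 0 < L -> 0 <= m ->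
  (r * (k + 1) - k) * (m - 1) - 4 * r * M * e - 2 * k * M <= r * (S - 2) ->
  k * L * e <= S - 2 + 2 * k * L ->
  (k + 1 - k / r - 8 * M / L) * m - 16 * M <= S.
Proof.
move=> k_ge2 k_le_r k_le_M L_gt0 m_ge0 potential_bound block_bound.
have r_gt0 : 0 < r by lra.
have M_ge0 : 0 <= M by lra.
have kL_gt0 : 0 < k * L by rewrite mulr_gt0 //; lra.
have /andP[u_ge0 u_le1] : 0 <= k / r <= 1.
  by rewrite divr_ge0 ?ler_pdivrMr //=; lra.
have ru : r * (k / r) = k by rewrite mulrC divfK // gt_eqF.
have yL : 8 * M / L * m * L = 8 * M * m by field; lra.
rewrite mulrBl; move: (k / r) (8 * M / L * m) u_ge0 u_le1 ru yL => u y u_ge0 u_le1 ru yL.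
have span_step : (k + 1 - u) * (m - 1) - 4 * M * e - 2 * M <= S - 2.
  rewrite -(ler_pM2l r_gt0).
  have : k * M <= r * M by rewrite ler_wpM2r //; lra.
  have : r * u * (m - 1) = k * (m - 1) by rewrite ru.
  nra.
have [S_large | S_small] := lerP ((k + 1 - u) * m) S.
  have : 0 <= y * L by rewrite yL !mulr_ge0 //; lra.
  by rewrite pmulr_lge0 //; lra.
rewrite -(ler_pM2l kL_gt0).
have := ler_wpM2l (ltW kL_gt0) span_step.
have := ler_wpM2l (ltW kL_gt0) block_bound.
have : 0 <= k * L * u by rewrite mulr_ge0 // ltW.
have : 4 * M * (S - 2) <= 4 * M * ((k + 1 - u) * m) by rewrite ler_wpM2l; lra.
have : 0 <= M * u * m by rewrite mulr_ge0 ?mulr_ge0.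
have : 0 <= M * m * (k - 1) by apply: mulr_ge0; [exact: mulr_ge0 | lra].
have : 0 <= k * L * (M - (k - 1)) by apply: mulr_ge0; [exact: ltW | lra].
have : k * (y * L) = k * (8 * M * m) by rewrite yL.
nra.
Qed.

Lemma le_first_of_step (d : Order.disp_t) (T : porderType d) (f : nat -> T) m :
  (forall j, (j.+1 < m)%N -> (f j <= f j.+1)%O) -> forall j, (j < m)%N -> (f 0 <= f j)%O.
Proof.
move=> f_step; elim=> // j IH j_lt.
exact: le_trans (IH (ltnW j_lt)) (f_step j j_lt).
Qed.

Section MatchedChain.
Variables (k R L M m : nat) (P Q A B : nat -> nat).
Hypotheses (k_gt1 : (1 < k)%N) (k_le_R : (k <= R)%N) (L_gt0 : (0 < L)%N).
Hypothesis A_range : forall j, (j < m)%N -> (0 < A j <= M)%N.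
Hypothesis B_range : forall j, (j < m)%N -> (0 < B j <= M)%N.
Hypothesis separated : forall j, (j < m)%N -> scale_separated R (A j) (B j).
Hypothesis P_incr : forall j, (j.+1 < m)%N -> (P j < P j.+1)%N.
Hypothesis Q_incr : forall j, (j.+1 < m)%N -> (Q j < Q j.+1)%N.
Hypothesis letters_match : forall j, (j < m)%N -> (P j %/ A j = Q j %/ B j %[mod k])%N.
Hypothesis A_blockwise : forall j, (j.+1 < m)%N ->
  (P j %/ (k * L) = P j.+1 %/ (k * L))%N -> A j.+1 = A j.
Hypothesis B_blockwise : forall j, (j.+1 < m)%N ->
  (Q j %/ (k * L) = Q j.+1 %/ (k * L))%N -> B j.+1 = B j.

Definition block_count j := (P j %/ (k * L) + Q j %/ (k * L))%N.

Definition chain_potential j : rat :=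
  R%:R * (P j + Q j)%:R + pair_potential R k (A j) (B j) (P j) (Q j)
  + 4 * R%:R * M%:R * (block_count j)%:R - (R%:R * (k%:R + 1) - k%:R) * j%:R.

Let k_gt0 : (0 < k)%N. Proof. exact: ltnW. Qed.
Let R_gt0 : (0 < R)%N. Proof. exact: leq_trans k_gt0 k_le_R. Qed.

Lemma R_le_M : (0 < m)%N -> (R <= M)%N.
Proof.
move=> m_gt0; have /andP[A_gt0 A_le_M] := A_range m_gt0.
have /andP[B_gt0 B_le_M] := B_range m_gt0.
case/orP: (separated m_gt0) => [RA_le | RB_le].
  by apply: leq_trans B_le_M; apply: leq_trans RA_le; rewrite leq_pmulr.
by apply: leq_trans A_le_M; apply: leq_trans RB_le; rewrite leq_pmulr.
Qed.

Lemma pair_potential_chain_bound j : (j < m)%N ->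
  `|pair_potential R k (A j) (B j) (P j) (Q j)| <= k%:R * M%:R.
Proof.
move=> j_lt; have /andP[A_gt0 A_le_M] := A_range j_lt.
have /andP[B_gt0 B_le_M] := B_range j_lt.
exact: pair_potential_bound k_gt0 R_gt0 A_gt0 B_gt0 (separated j_lt) A_le_M B_le_M.
Qed.

Lemma chain_potential_step_same_blocks j : (j.+1 < m)%N ->
  (P j %/ (k * L) = P j.+1 %/ (k * L))%N -> (Q j %/ (k * L) = Q j.+1 %/ (k * L))%N ->
  chain_potential j <= chain_potential j.+1.
Proof.
move=> j1_lt P_block Q_block; have j_lt : (j < m)%N by exact: ltnW.
have /andP[A_gt0 _] := A_range j_lt; have /andP[B_gt0 _] := B_range j_lt.
have := letters_match j1_lt.
rewrite /chain_potential /block_count -P_block -Q_block -natr1.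
rewrite (A_blockwise j1_lt P_block) (B_blockwise j1_lt Q_block).
move=> /(pair_potential_step k_gt0 k_le_R A_gt0 B_gt0 (separated j_lt) (P_incr j1_lt)
  (Q_incr j1_lt) (letters_match j_lt)).
lra.
Qed.

Lemma chain_potential_step_new_block j : (j.+1 < m)%N ->
  (block_count j < block_count j.+1)%N -> chain_potential j <= chain_potential j.+1.
Proof.
move=> j1_lt block_lt; have j_lt : (j < m)%N by exact: ltnW.
have block_le : (block_count j)%:R + 1 <= (block_count j.+1)%:R :> rat by rewrite natr1 ler_nat.
have pos_le : (P j + Q j)%:R <= (P j.+1 + Q j.+1)%:R :> rat.
  by rewrite ler_nat leq_add // ltnW ?P_incr ?Q_incr.
have m_gt0 : (0 < m)%N := leq_ltn_trans (leq0n j) j_lt.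
have gain_le : R%:R * (k%:R + 1) - k%:R + 2 * (k%:R * M%:R) <= 4 * (R%:R * M%:R) :> rat.
  by apply: step_gain_le_block_bonus; rewrite ?ler1n ?ler_nat // R_le_M.
have := pair_potential_chain_bound j_lt; have := pair_potential_chain_bound j1_lt.
rewrite !ler_norml => /andP[? ?] /andP[? ?].
have RM_ge0 : 0 <= 4 * R%:R * M%:R :> rat by rewrite -!natrM ler0n.
have := ler_wpM2l RM_ge0 block_le; have := ler_wpM2l (ler0n rat R) pos_le.
rewrite /chain_potential -natr1; lra.
Qed.

Lemma chain_potential_step j : (j.+1 < m)%N -> chain_potential j <= chain_potential j.+1.
Proof.
move=> j1_lt; have P_le := leq_div2r (k * L) (ltnW (P_incr j1_lt)).
have Q_le := leq_div2r (k * L) (ltnW (Q_incr j1_lt)).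
have [P_block | P_lt] := eqVneq (P j %/ (k * L))%N (P j.+1 %/ (k * L))%N.
  have [Q_block | Q_lt] := eqVneq (Q j %/ (k * L))%N (Q j.+1 %/ (k * L))%N.
    exact: chain_potential_step_same_blocks.
  apply: chain_potential_step_new_block j1_lt _.
  by rewrite /block_count P_block ltn_add2l ltn_neqAle Q_lt.
apply: chain_potential_step_new_block j1_lt _.
by rewrite /block_count -addSn leq_add // ltn_neqAle P_lt.
Qed.

Lemma chain_span_bound : (0 < m)%N ->
  (k%:R + 1 - k%:R / R%:R - 8 * M%:R / L%:R) * m%:R - 16 * M%:R
  <= ((P m.-1 - P 0).+1 + (Q m.-1 - Q 0).+1)%:R :> rat.
Proof.
move=> m_gt0; have n_lt : (m.-1 < m)%N by rewrite prednK.
have P_mono := @le_first_of_step _ nat P m (fun j j_lt => ltnW (P_incr j_lt)) _ n_lt.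
have Q_mono := @le_first_of_step _ nat Q m (fun j j_lt => ltnW (Q_incr j_lt)) _ n_lt.
have potential_mono := le_first_of_step chain_potential_step n_lt.
have m_eq : m%:R = m.-1%:R + 1 :> rat by rewrite natr1 prednK.
have kL_gt0 : (0 < k * L)%N by rewrite muln_gt0 k_gt0.
have blocks_last : (block_count m.-1 * (k * L) <= P m.-1 + Q m.-1)%N.
  by rewrite mulnDl leq_add ?leq_trunc_div.
have blocks_first : (P 0 + Q 0 + 1 <= (block_count 0 + 2) * (k * L))%N.
  have := leq_add (ltn_ceil (P 0) kL_gt0) (ltnW (ltn_ceil (Q 0) kL_gt0)).
  by rewrite /block_count addn1 -addSn !mulnDl !mulSnr addnACA addnn -mul2n.
have := pair_potential_chain_bound m_gt0; have := pair_potential_chain_bound n_lt.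
rewrite !ler_norml => /andP[? ?] /andP[? ?].
move: potential_mono blocks_last blocks_first.
rewrite /chain_potential /block_count mulr0n mulr0 subr0.
rewrite -!(ler_nat rat) !natrD !natrM => ? ? ?.
rewrite -!natr1 !natrB //.
apply: (@span_bound_algebra _ _ _ _ _ _ _ ((block_count m.-1)%:R - (block_count 0)%:R)).
- by rewrite ler_nat.
- by rewrite ler_nat.
- by rewrite ler_nat (leq_trans k_le_R (R_le_M m_gt0)).
- by rewrite ltr0n.
- exact: ler0n.
- by rewrite /block_count m_eq !natrD; lra.
- by rewrite /block_count !natrD; lra.
Qed.

End MatchedChain.

Theorem lemma3p4 (k K R L : nat) (w1 w2 I1 I2 : seq nat) :
  (2 <= k)%N -> (1 <= K)%N -> (k <= R)%N -> (0 < L)%N -> (R ^ (K - 1) %| L)%N ->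
  all (fun l => 0 < l <= K)%N w1 -> all (fun l => 0 < l <= K)%N w2 ->
  common_subseq (hatw k R L w1) (hatw k R L w2) I1 I2 ->
  badly_matched k L w1 w2 I1 I2 ->
  ((k%:R + 1 - k%:R / R%:R - 8 * (R ^ (K - 1))%:R / L%:R) * (size I1)%:R
     - 16 * (R ^ (K - 1))%:R : rat)
  <= (wspan I1 + wspan I2)%:R.
Proof.
move=> k_gt1 _ k_le_R L_gt0 top_dvd w1_range w2_range [I1_pos I2_pos size_eq same_letter] bad.
have R_gt0 : (0 < R)%N := leq_trans (ltnW k_gt1) k_le_R.
have lt2 j : (j < size I1)%N -> (j < size I2)%N by rewrite size_eq.
have [-> | m_gt0] := posnP (size I1).
  by rewrite mulr0 sub0r (le_trans _ (ler0n _ _)) // oppr_le0 mulr_ge0.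
rewrite natrD !wspan_nth -?size_eq // -natrD.
apply: (@chain_span_bound k R L _ _ (nth 0 I1) (nth 0 I2)
  (fun j => parent_scale k R L w1 (nth 0 I1 j)) (fun j => parent_scale k R L w2 (nth 0 I2 j))) => //.
- exact: matched_scale_range R_gt0 w1_range top_dvd I1_pos.
- by move=> j /lt2; apply: (matched_scale_range R_gt0 w2_range top_dvd I2_pos).
- move=> j j_lt; apply: scale_separated_exp R_gt0 _ _ (bad j j_lt).
  + by case/andP: (matched_parent_range w1_range top_dvd I1_pos j_lt).
  + by case/andP: (matched_parent_range w2_range top_dvd I2_pos (lt2 j j_lt)).
- by move=> j; apply: subseq_pos_nth_incr I1_pos.
- by move=> j /lt2; apply: subseq_pos_nth_incr I2_pos.
- move=> j j_lt; apply: (@addIn 1); have := same_letter j j_lt.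
  rewrite (matched_letter R_gt0 w1_range top_dvd I1_pos j_lt).
  by rewrite (matched_letter R_gt0 w2_range top_dvd I2_pos (lt2 j j_lt)).
- by move=> j _ same_block; rewrite /parent_scale /parent_letter same_block.
- by move=> j _ same_block; rewrite /parent_scale /parent_letter same_block.
Qed.
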